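(* Let $\tau_1(\mathbf X)$ be the lifetime of a coherent system whose component lifetimes $X_1,\dots,X_n$ are (possibly dependent) identically distributed as $X$, with domination function $h_1$, i.e. $\bar F_{\tau_1(\mathbf X)}(x)=h_1(\bar F_X(x))$; and let $\tau_2(\mathbf Y)$ be the lifetime of a coherent system whose component lifetimes $Y_1,\dots,Y_m$ are identically distributed as $Y$, with domination function $h_2$, i.e. $\bar F_{\tau_2(\mathbf Y)}(x)=h_2(\bar F_Y(x))$. For $p\in(0,1)$ set $R_i(p)=(1-p)h_i'(p)/(1-h_i(p))$, $i=1,2$. Suppose that (i) $R_1(p)$ and $R_1(p)/R_2(p)$ are increasing in $p\in(0,1)$; (ii) $pR_1'(p)/R_1(p)$ or $pR_2'(p)/R_2(p)$ is decreasing in $p\in(0,1)$; (iii) $X\underset{b}{\prec}Y$ and $X\le_{hr}Y$. Then $\tau_1(\mathbf X)\underset{b}{\prec}\tau_2(\mathbf Y)$.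
   Context: All random variables are non-negative and absolutely continuous with support $[0,\infty)$. For a random variable $W$: density $f_W$, cdf $F_W$, survival $\bar F_W=1-F_W$, hazard rate $r_W=f_W/\bar F_W$, reversed hazard rate $\tilde r_W=f_W/F_W$. $X\le_{hr}Y$ means $\bar F_Y(x)/\bar F_X(x)$ is increasing in $x$. $X\underset{b}{\prec}Y$ ($X$ ages faster than $Y$ in reversed failure rate) means $\tilde r_X(x)/\tilde r_Y(x)$ is decreasing in $x\ge0$. For a coherent system with identically distributed (possibly dependent) components with common distribution that of $X$, the system reliability is $h(\bar F_X(x))$ for a domination function $h:[0,1]\to[0,1]$ (depending on structure and survival copula), increasing, continuous, $h(0)=0$, $h(1)=1$, assumed differentiable as needed. ''Increasing'' means non-decreasing, ''decreasing'' means non-increasing. *)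

From Stdlib Require Import Reals.
From Coquelicot Require Import Coquelicot.
Open Scope R_scope.

(* Cumulative distribution function F of a non-negative, absolutely continuous
   random variable with support [0,oo): F = 0 on (-oo,0], non-decreasing,
   continuous, F -> 1 at +oo, 0 < F < 1 on (0,oo), and F has a density
   f = F' at every x > 0 (so hazard / reversed hazard rates are pointwise
   defined). *)
Definition lifetime_cdf (F : R -> R) : Prop :=
  (forall x, x <= 0 -> F x = 0) /\
  (forall x y, x <= y -> F x <= F y) /\
  (forall x, continuous F x) /\
  is_lim F p_infty 1 /\
  (forall x, 0 < x -> 0 < F x < 1) /\
  (forall x, 0 < x -> ex_derive F x).

Definition surv (F : R -> R) (x : R) : R := 1 - F x.
Definition dens (F : R -> R) (x : R) : R := Derive F x.
Definition rhr (F : R -> R) (x : R) : R := dens F x / F x.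

Definition hr_le (FX FY : R -> R) : Prop :=
  forall x y, x <= y -> surv FY x / surv FX x <= surv FY y / surv FX y.

(* X ages faster than Y in reversed failure rate:
   rhr_X / rhr_Y decreasing on x >= 0 (x > 0, where the rates are defined) *)
Definition ages_faster_rfr (FX FY : R -> R) : Prop :=
  forall x y, 0 < x -> x <= y -> rhr FX y / rhr FY y <= rhr FX x / rhr FY x.

Definition domination_fun (h : R -> R) : Prop :=
  (forall p, 0 <= p <= 1 -> 0 <= h p <= 1) /\
  (forall p q, 0 <= p -> p <= q -> q <= 1 -> h p <= h q) /\
  (forall p, 0 <= p <= 1 -> continuity_pt h p) /\
  h 0 = 0 /\ h 1 = 1 /\
  (forall p, 0 < p < 1 -> ex_derive h p).

Definition Rfun (h : R -> R) (p : R) : R := (1 - p) * Derive h p / (1 - h p).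

Definition incr01 (g : R -> R) : Prop :=
  forall p q, 0 < p -> p <= q -> q < 1 -> g p <= g q.
Definition decr01 (g : R -> R) : Prop :=
  forall p q, 0 < p -> p <= q -> q < 1 -> g q <= g p.

From Stdlib Require Import Reals Lra.
From Coquelicot Require Import Coquelicot.
Open Scope R_scope.

(* By the chain rule, rhr_tau_i (x) = R_i (Fbar (x)) * rhr (x), so the ratio of the
   reversed hazard rates of the two systems is A(x) * rhr_X(x) / rhr_Y(x) with
   A(x) = R_1(Fbar_X x) / R_2(Fbar_Y x).  The second factor is nonincreasing by (iii),
   and A is positive with logarithmic derivative
     - (f_X / Fbar_X) G_1(Fbar_X) + (f_Y / Fbar_Y) G_2(Fbar_Y),
   where G_i(p) = p R_i'(p) / R_i(p) is the elasticity of R_i.  The hazard rate order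
   gives Fbar_X <= Fbar_Y and f_Y / Fbar_Y <= f_X / Fbar_X; monotonicity of R_1 / R_2
   gives G_2 <= G_1, which together with (ii) yields G_2(Fbar_Y) <= G_1(Fbar_X); and
   G_1 >= 0 because R_1 is increasing.  Hence A is nonincreasing. *)

(* Division by zero yields zero, so no positivity of [b] is needed. *)
Lemma Rdiv_nonneg (a b : R) : 0 <= a -> 0 <= b -> 0 <= a / b.
Proof.
  intros Ha Hb. destruct (Req_dec b 0) as [->|Hb0].
  - unfold Rdiv. rewrite Rinv_0. lra.
  - apply Rdiv_le_0_compat; lra.
Qed.

Lemma Rdiv_mult_distr (a b c d : R) : a * b / (c * d) = a / c * (b / d).
Proof. unfold Rdiv. rewrite Rinv_mult. ring. Qed.

Lemma Rdiv_nonneg_num (a b : R) : 0 < b -> 0 <= a / b -> 0 <= a.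
Proof.
  intros Hb Hab. replace a with (a / b * b) by (field; lra).
  apply Rmult_le_pos; lra.
Qed.

Lemma is_derive_ge0_of_monotone (f : R -> R) (a b x l : R) :
  a < x < b ->
  (forall p q, a < p -> p <= q -> q < b -> f p <= f q) ->
  is_derive f x l -> 0 <= l.
Proof.
  intros Hx Hmono Hd. apply is_derive_Reals in Hd.
  destruct (Rle_or_lt 0 l) as [|Hl]; [assumption|].
  destruct (Hd (- l / 2)) as [d Hball]; [lra|].
  pose proof (cond_pos d) as Hd0.
  set (h := Rmin (d / 2) ((b - x) / 2)).
  assert (Hh_d : h <= d / 2) by apply Rmin_l.
  assert (Hh_b : h <= (b - x) / 2) by apply Rmin_r.
  assert (Hh0 : 0 < h) by (unfold h; apply Rmin_pos; lra).
  assert (Hquot : 0 <= (f (x + h) - f x) / h).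
  { apply Rdiv_le_0_compat; [|lra].
    assert (f x <= f (x + h)) by (apply Hmono; lra). lra. }
  assert (Habs : Rabs h < d) by (rewrite Rabs_right; lra).
  specialize (Hball h (Rgt_not_eq _ _ Hh0) Habs).
  apply Rabs_def2 in Hball. lra.
Qed.

Lemma monotone_ratio_derive_le (f g : R -> R) (a b x df dg : R) :
  a < x < b ->
  (forall p q, a < p -> p <= q -> q < b -> f p / g p <= f q / g q) ->
  is_derive f x df -> is_derive g x dg -> 0 < g x ->
  f x * dg <= df * g x.
Proof.
  intros Hx Hmono Hf Hg Hgx.
  pose proof (is_derive_div f g x df dg Hf Hg (Rgt_not_eq _ _ Hgx)) as Hdiv.
  apply (is_derive_ge0_of_monotone _ a b x) in Hdiv; [|assumption|assumption].
  apply Rdiv_nonneg_num in Hdiv; [lra|]. apply pow_lt. lra.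
Qed.

Lemma nonincreasing_of_derive_nonpos (f : R -> R) (a : R) :
  (forall x, a < x -> exists2 l, is_derive f x l & l <= 0) ->
  forall x y, a < x -> x <= y -> f y <= f x.
Proof.
  intros Hd x y Hx Hxy.
  assert (HD : forall t, a < t -> is_derive f t (Derive f t) /\ Derive f t <= 0).
  { intros t Ht. destruct (Hd t Ht) as [l Hl Hl0].
    rewrite (is_derive_unique _ _ _ Hl). split; assumption. }
  destruct (Rle_lt_or_eq_dec _ _ Hxy) as [Hlt|<-]; [|lra].
  destruct (MVT_gen f x y (Derive f)) as [c [Hc Hmvt]].
  - intros t Ht. rewrite Rmin_left in Ht by lra. apply HD. lra.
  - intros t Ht. rewrite Rmin_left in Ht by lra.
    apply continuity_pt_filterlim, (ex_derive_continuous (V := R_NormedModule)).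
    exists (Derive f t). apply HD. lra.
  - rewrite Rmin_left in Hc by lra.
    assert (Derive f c * (y - x) <= 0) by (apply Rmult_le_0_r; [apply HD|]; lra).
    lra.
Qed.

Section Lifetime.

Variable F : R -> R.
Hypothesis HF : lifetime_cdf F.

Lemma lifetime_surv_in01 (x : R) : 0 < x -> 0 < surv F x < 1.
Proof.
  destruct HF as [_ [_ [_ [_ [H01 _]]]]]. intros Hx.
  specialize (H01 x Hx). unfold surv. lra.
Qed.

Lemma lifetime_dens_ge0 (x : R) : 0 < x -> 0 <= dens F x.
Proof.
  destruct HF as [_ [Hmono [_ [_ [_ Hd]]]]]. intros Hx.
  apply (is_derive_ge0_of_monotone F (x - 1) (x + 1) x); [lra| |].
  - intros p q _ Hpq _. apply Hmono, Hpq.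
  - apply Derive_correct, Hd, Hx.
Qed.

Lemma lifetime_rhr_ge0 (x : R) : 0 < x -> 0 <= rhr F x.
Proof.
  intros Hx. pose proof (lifetime_surv_in01 x Hx) as Hs. unfold surv in Hs.
  apply Rdiv_nonneg; [apply lifetime_dens_ge0, Hx | lra].
Qed.

Lemma lifetime_is_derive_surv (x : R) : 0 < x -> is_derive (surv F) x (- dens F x).
Proof.
  destruct HF as [_ [_ [_ [_ [_ Hd]]]]]. intros Hx.
  unfold surv, dens. auto_derive; [apply Hd, Hx | now rewrite Rmult_1_l].
Qed.

Lemma rhr_comp_surv (Ft h : R -> R) (x : R) :
  domination_fun h -> (forall t, surv Ft t = h (surv F t)) ->
  0 < x -> 0 < Rfun h (surv F x) ->
  rhr Ft x = Rfun h (surv F x) * rhr F x.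
Proof.
  intros [_ [_ [_ [_ [_ Hh]]]]] HFt Hx HR.
  pose proof (lifetime_surv_in01 x Hx) as Hs.
  assert (Hh1 : 1 - h (surv F x) <> 0).
  { intros E. unfold Rfun in HR. rewrite E, Rdiv_0_r in HR. lra. }
  assert (EFt : forall t, Ft t = 1 - h (surv F t)).
  { intros t. specialize (HFt t). unfold surv in HFt |- *. lra. }
  assert (Hcomp : is_derive (fun t => h (surv F t)) x (- dens F x * Derive h (surv F x))).
  { exact (is_derive_comp h (surv F) x _ _
             (Derive_correct _ _ (Hh _ Hs)) (lifetime_is_derive_surv x Hx)). }
  assert (HDcomp : Derive (fun t => h (surv F t)) x = - dens F x * Derive h (surv F x)).
  { apply is_derive_unique, Hcomp. }
  assert (Hdens : dens Ft x = Derive h (surv F x) * dens F x).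
  { unfold dens at 1. rewrite (Derive_ext _ _ x EFt), Derive_minus, Derive_const, HDcomp.
    - ring.
    - apply ex_derive_const.
    - eexists. exact Hcomp. }
  unfold rhr. rewrite Hdens, (EFt x). unfold Rfun, surv in *.
  field. split; [lra | assumption].
Qed.

End Lifetime.

Section HazardRateOrder.

Variables FX FY : R -> R.
Hypotheses (HX : lifetime_cdf FX) (HY : lifetime_cdf FY) (Hhr : hr_le FX FY).

Lemma hr_le_surv_le (x : R) : 0 < x -> surv FX x <= surv FY x.
Proof.
  intros Hx. pose proof (Hhr 0 x (Rlt_le _ _ Hx)) as Hratio.
  destruct HX as [HX0 _]. destruct HY as [HY0 _].
  pose proof (lifetime_surv_in01 FX HX x Hx) as Hs.
  unfold surv in Hratio, Hs |- *. rewrite HX0, HY0, Rdiv_diag in Hratio by lra.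
  replace (1 - FY x) with ((1 - FY x) / (1 - FX x) * (1 - FX x)) by (field; lra).
  nra.
Qed.

Lemma hr_le_hazard_le (x : R) : 0 < x -> dens FY x * surv FX x <= dens FX x * surv FY x.
Proof.
  intros Hx.
  pose proof (monotone_ratio_derive_le (surv FY) (surv FX) (x - 1) (x + 1) x
    (- dens FY x) (- dens FX x)) as Hcross.
  assert (surv FY x * - dens FX x <= - dens FY x * surv FX x); [|lra].
  apply Hcross.
  - lra.
  - intros p q _ Hpq _. apply Hhr, Hpq.
  - apply lifetime_is_derive_surv; assumption.
  - apply lifetime_is_derive_surv; assumption.
  - apply lifetime_surv_in01; assumption.
Qed.

End HazardRateOrder.

Definition elasticity (g : R -> R) (p : R) : R := p * Derive g p / g p.

Lemma elasticity_le_of_ratio_incr (g1 g2 : R -> R) (p : R) :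
  incr01 (fun q => g1 q / g2 q) -> 0 < p < 1 ->
  ex_derive g1 p -> ex_derive g2 p -> 0 < g1 p -> 0 < g2 p ->
  elasticity g2 p <= elasticity g1 p.
Proof.
  intros Hincr Hp Hd1 Hd2 Hpos1 Hpos2.
  pose proof (monotone_ratio_derive_le g1 g2 0 1 p _ _ Hp Hincr
    (Derive_correct _ _ Hd1) (Derive_correct _ _ Hd2) Hpos2) as Hcross.
  unfold elasticity.
  replace (p * Derive g2 p / g2 p) with (p / (g1 p * g2 p) * (g1 p * Derive g2 p))
    by (field; lra).
  replace (p * Derive g1 p / g1 p) with (p / (g1 p * g2 p) * (Derive g1 p * g2 p))
    by (field; lra).
  apply Rmult_le_compat_l; [|assumption].
  apply Rdiv_le_0_compat; [lra | apply Rmult_lt_0_compat; assumption].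
Qed.

Lemma elasticity_le_cross (g1 g2 : R -> R) :
  (forall p, 0 < p < 1 -> elasticity g2 p <= elasticity g1 p) ->
  decr01 (elasticity g1) \/ decr01 (elasticity g2) ->
  forall u v, 0 < u -> u <= v -> v < 1 -> elasticity g2 v <= elasticity g1 u.
Proof.
  intros Hle [Hdecr | Hdecr] u v Hu Huv Hv.
  - apply (Rle_trans _ (elasticity g1 v)); [apply Hle; lra | apply Hdecr; assumption].
  - apply (Rle_trans _ (elasticity g2 u)); [apply Hdecr; assumption | apply Hle; lra].
Qed.

(* With u = Fbar_X, v = Fbar_Y, a = R_1 u and b = R_2 v this says (log A)' <= 0. *)
Lemma scaled_log_derivative_le (a da b db u v fX fY : R) :
  0 < u -> 0 < v -> 0 < a -> 0 < b -> 0 <= da -> 0 <= fY ->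
  fY * u <= fX * v -> v * db / b <= u * da / a ->
  fY * (db / b) <= fX * (da / a).
Proof.
  intros Hu Hv Ha Hb Hda HfY Hhaz Hel.
  assert (Hel1 : 0 <= u * da / a) by (apply Rdiv_le_0_compat; nra).
  apply (Rmult_le_reg_r (u * v)); [nra|].
  replace (fY * (db / b) * (u * v)) with (v * db / b * (fY * u)) by (field; lra).
  replace (fX * (da / a) * (u * v)) with (u * da / a * (fX * v)) by (field; lra).
  apply (Rle_trans _ (u * da / a * (fY * u))).
  - apply Rmult_le_compat_r; [apply Rmult_le_pos|]; lra.
  - apply Rmult_le_compat_l; assumption.
Qed.

Lemma ratio_comp_surv_nonincreasing (FX FY g1 g2 : R -> R) :
  lifetime_cdf FX -> lifetime_cdf FY -> hr_le FX FY ->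
  (forall p, 0 < p < 1 -> ex_derive g1 p) -> (forall p, 0 < p < 1 -> ex_derive g2 p) ->
  (forall p, 0 < p < 1 -> 0 < g1 p) -> (forall p, 0 < p < 1 -> 0 < g2 p) ->
  incr01 g1 ->
  (forall u v, 0 < u -> u <= v -> v < 1 -> elasticity g2 v <= elasticity g1 u) ->
  forall x y, 0 < x -> x <= y ->
  g1 (surv FX y) / g2 (surv FY y) <= g1 (surv FX x) / g2 (surv FY x).
Proof.
  intros HX HY Hhr Hd1 Hd2 Hpos1 Hpos2 Hincr1 Hel.
  apply (nonincreasing_of_derive_nonpos (fun t => g1 (surv FX t) / g2 (surv FY t))).
  intros x Hx.
  pose proof (lifetime_surv_in01 FX HX x Hx) as Hu.
  pose proof (lifetime_surv_in01 FY HY x Hx) as Hv.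
  assert (HD1 : is_derive (fun t => g1 (surv FX t)) x
                  (- dens FX x * Derive g1 (surv FX x))).
  { exact (is_derive_comp g1 (surv FX) x _ _
             (Derive_correct _ _ (Hd1 _ Hu)) (lifetime_is_derive_surv FX HX x Hx)). }
  assert (HD2 : is_derive (fun t => g2 (surv FY t)) x
                  (- dens FY x * Derive g2 (surv FY x))).
  { exact (is_derive_comp g2 (surv FY) x _ _
             (Derive_correct _ _ (Hd2 _ Hv)) (lifetime_is_derive_surv FY HY x Hx)). }
  eexists; [apply (is_derive_div _ _ x _ _ HD1 HD2), Rgt_not_eq, Hpos2, Hv|].
  cbv beta.
  set (u := surv FX x) in *. set (v := surv FY x) in *.
  pose proof (Hpos1 u Hu) as Ha. pose proof (Hpos2 v Hv) as Hb.
  assert (Hlog : dens FY x * (Derive g2 v / g2 v) <= dens FX x * (Derive g1 u / g1 u)).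
  { apply (scaled_log_derivative_le _ _ _ _ u v).
    - apply Hu.
    - apply Hv.
    - exact Ha.
    - exact Hb.
    - apply (is_derive_ge0_of_monotone g1 0 1 u); [assumption..|].
      apply Derive_correct, Hd1, Hu.
    - apply lifetime_dens_ge0; assumption.
    - exact (hr_le_hazard_le FX FY HX HY Hhr x Hx).
    - apply Hel; [apply Hu | apply hr_le_surv_le; assumption | apply Hv]. }
  replace ((- dens FX x * Derive g1 u * g2 v - g1 u * (- dens FY x * Derive g2 v)) / g2 v ^ 2)
    with (g1 u / g2 v * (dens FY x * (Derive g2 v / g2 v) - dens FX x * (Derive g1 u / g1 u)))
    by (field; split; lra).
  apply Rmult_le_0_l; [apply Rdiv_le_0_compat|]; lra.
Qed.

Theorem theorem3p2
  (FX FY : R -> R) (h1 h2 : R -> R) (Ftau1 Ftau2 : R -> R)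
  (HX : lifetime_cdf FX) (HY : lifetime_cdf FY)
  (Hh1 : domination_fun h1) (Hh2 : domination_fun h2)
  (Htau1 : forall x, surv Ftau1 x = h1 (surv FX x))
  (Htau2 : forall x, surv Ftau2 x = h2 (surv FY x))
  (HR1d : forall p, 0 < p < 1 -> ex_derive (Rfun h1) p)
  (HR2d : forall p, 0 < p < 1 -> ex_derive (Rfun h2) p)
  (HR1p : forall p, 0 < p < 1 -> 0 < Rfun h1 p)
  (HR2p : forall p, 0 < p < 1 -> 0 < Rfun h2 p)
  (Hi1 : incr01 (Rfun h1))
  (Hi2 : incr01 (fun p => Rfun h1 p / Rfun h2 p))
  (Hii : decr01 (fun p => p * Derive (Rfun h1) p / Rfun h1 p) \/
         decr01 (fun p => p * Derive (Rfun h2) p / Rfun h2 p))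
  (Hiii1 : ages_faster_rfr FX FY)
  (Hiii2 : hr_le FX FY) :
  ages_faster_rfr Ftau1 Ftau2.
Proof.
  assert (Hel : forall u v, 0 < u -> u <= v -> v < 1 ->
                  elasticity (Rfun h2) v <= elasticity (Rfun h1) u).
  { apply elasticity_le_cross; [|exact Hii].
    intros p Hp. apply elasticity_le_of_ratio_incr; auto. }
  pose proof (ratio_comp_surv_nonincreasing FX FY (Rfun h1) (Rfun h2)
    HX HY Hiii2 HR1d HR2d HR1p HR2p Hi1 Hel) as Hratio.
  pose proof (lifetime_surv_in01 FX HX) as HsX.
  pose proof (lifetime_surv_in01 FY HY) as HsY.
  intros x y Hx Hxy. assert (Hy : 0 < y) by lra.
  rewrite !(rhr_comp_surv FX HX Ftau1 h1), !(rhr_comp_surv FY HY Ftau2 h2),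
    !Rdiv_mult_distr by auto.
  apply Rmult_le_compat.
  - apply Rdiv_le_0_compat; [apply Rlt_le, HR1p | apply HR2p]; auto.
  - apply Rdiv_nonneg; apply lifetime_rhr_ge0; assumption.
  - apply Hratio; assumption.
  - apply Hiii1; assumption.
Qed.
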